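(* Let $A$ be a finite set, $p : A \to [0,1]$, and $\gamma : \mathbb{N}^* \to (0,1]$ non-increasing; set $p_i(u) := \gamma(i)p(u)$. Let $\{X_i(u)\}_{i\ge1,u\in A}$ be independent with $X_i(u)\sim\mathrm{Bernoulli}(p_i(u))$. For $n \ge 1$ define $Z_n(u) := \mathds{1}\{X_1(u)=\dots=X_n(u)=0\}$, $R_n := \sum_{u\in A} Z_n(u)\,p_{n+1}(u)$, \[ U^\gamma_n(u) := \sum_{i=1}^n \mathds{1}\{X_i(u)=1,\ X_j(u)=0\ \forall j\in\{1,\dots,n\}\setminus\{i\}\}\,\frac{\gamma(n+1)}{\gamma(i)}, \] $\hat R_n := \frac1n\sum_{u\in A}U^\gamma_n(u)$, and $\lambda := \sum_{u\in A}p(u)$. Then \[ \mathbb{E}[R_n] - \mathbb{E}[\hat R_n] \in \left[-\gamma(n+1)\frac{\lambda}{n}, 0\right]. \]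
   Context: Influencer fatigue model: at the $i$-th selection of the influencer, node $u$ is activated with probability $\gamma(i)p(u)$, independently across nodes and selections. $R_n$ is the remaining potential for the $(n+1)$-th selection, $\hat R_n$ the reweighted Good-Turing estimator. *)

From HB Require Import structures.
From mathcomp Require Export all_boot all_order all_algebra.
Set Implicit Arguments. Unset Strict Implicit. Unset Printing Implicit Defensive.
Import Order.TTheory GRing.Theory Num.Theory.
Local Open Scope ring_scope.

(* p_i(u) := gamma(i) p(u); selections are indexed from 1. *)
Definition pi {R : realFieldType} {A : finType} (gamma : nat -> R) (p : A -> R)
  (i : nat) (u : A) : R := gamma i * p u.

(* Outcomes of the first n selections: omega (i, u) = X_{i+1}(u). *)
Definition Omega (n : nat) (A : finType) := {ffun 'I_n * A -> bool}.

Definition prob {R : realFieldType} {A : finType} (gamma : nat -> R) (p : A -> R)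
  (n : nat) (w : Omega n A) : R :=
  \prod_(k : 'I_n * A)
     (if w k then pi gamma p (k.1 : nat).+1 k.2 else 1 - pi gamma p (k.1 : nat).+1 k.2).

Definition Expect {R : realFieldType} {A : finType} (gamma : nat -> R) (p : A -> R)
  (n : nat) (f : Omega n A -> R) : R :=
  \sum_(w : Omega n A) prob gamma p w * f w.

Definition Zn {A : finType} (n : nat) (w : Omega n A) (u : A) : bool :=
  [forall i : 'I_n, ~~ w (i, u)].

Definition Rn {R : realFieldType} {A : finType} (gamma : nat -> R) (p : A -> R)
  (n : nat) (w : Omega n A) : R :=
  \sum_(u : A) (Zn w u)%:R * pi gamma p n.+1 u.

Definition Ugamma {R : realFieldType} {A : finType} (gamma : nat -> R)
  (n : nat) (w : Omega n A) (u : A) : R :=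
  \sum_(i : 'I_n)
     (w (i, u) && [forall j : 'I_n, (j != i) ==> ~~ w (j, u)])%:R
       * (gamma n.+1 / gamma (i : nat).+1).

Definition Rhat {R : realFieldType} {A : finType} (gamma : nat -> R)
  (n : nat) (w : Omega n A) : R :=
  (n%:R)^-1 * \sum_(u : A) Ugamma gamma w u.

From Pilot Require Import Defs.
From mathcomp Require Import all_boot all_order all_algebra.
From mathcomp.algebra_tactics Require Import ring.
Import Order.TTheory GRing.Theory Num.Theory.
Local Open Scope ring_scope.

(** Writing [q_i(u) = 1 - p_i(u)], independence gives
    [E R_n = sum_u p_{n+1}(u) prod_i q_i(u)] and
    [E hat R_n = (gamma(n+1)/n) sum_u p(u) sum_i prod_(j <> i) q_j(u)],
    the factor [gamma(i)] of [P(u is hit only at selection i)] cancelling the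
    reweighting [1/gamma(i)].  Since
    [n prod_i q_i = sum_i q_i prod_(j <> i) q_j], the difference is
    [-(gamma(n+1)/n) sum_u p(u) T(u)], where [T(u) = sum_i p_i(u) prod_(j <> i) q_j(u)]
    is the probability that [u] is hit exactly once; as [0 <= T(u) <= 1], the
    difference lies in [[-gamma(n+1) lambda / n, 0]]. *)

Set Implicit Arguments.

Lemma prodr_nat_bool {R : numDomainType} {I : finType} (P : pred I) (b : I -> bool) :
  \prod_(i | P i) ((b i)%:R : R) = [forall i, P i ==> b i]%:R.
Proof.
case: (boolP [forall i, P i ==> b i]) => [/forallP Pb | /forallPn [i]].
  by rewrite big1 // => i Pi; move: (Pb i); rewrite Pi => /= ->.
by rewrite negb_imply => /andP [Pi /negbTE bi]; rewrite (bigD1 i) //= bi mul0r.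
Qed.

Lemma prod_pair_at {R : comNzRingType} {I J : finType} (j : J) (F : I -> R) :
  \prod_(k : I * J) (if k.2 == j then F k.1 else 1) = \prod_i F i.
Proof.
rewrite -(pair_bigA _ (fun i j' => if j' == j then F i else 1)).
by apply: eq_bigr => i _; rewrite (bigD1 j) //= eqxx big1 ?mulr1 // => j' /negbTE ->.
Qed.

Lemma sum_prod_off_diag {R : comNzRingType} {I : finType} (a : I -> R) :
  \sum_i \prod_(j | j != i) (1 - a j) - #|I|%:R * \prod_i (1 - a i)
    = \sum_i a i * \prod_(j | j != i) (1 - a j).
Proof.
rewrite mulr_natl -sumr_const -sumrB; apply: eq_bigr => i _.
by rewrite [X in _ - X](bigD1 i) //= mulrBl mul1r subKr.
Qed.

Definition sole_success {n : nat} {A : finType} (w : Omega n A) (u : A) (i : 'I_n) : bool :=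
  w (i, u) && [forall j, (j != i) ==> ~~ w (j, u)].

Definition hit_once_prob {R : realFieldType} {A : finType} (gamma : nat -> R) (p : A -> R)
    (n : nat) (u : A) : R :=
  \sum_(i < n) Defs.pi gamma p i.+1 u * \prod_(j | j != i) (1 - Defs.pi gamma p j.+1 u).

Section ProductBernoulli.
Variables (R : realFieldType) (A : finType) (gamma : nat -> R) (p : A -> R) (n : nat).

Local Notation E := (@Expect R A gamma p n).
Local Notation P i u := (Defs.pi gamma p i u).

Lemma ExpectD (I : finType) (f : I -> Omega n A -> R) :
  E (fun w => \sum_i f i w) = \sum_i E (f i).
Proof.
by rewrite /Expect (eq_bigr _ (fun w _ => big_distrr _ _ _)) exchange_big.
Qed.

Lemma ExpectMl (c : R) (f : Omega n A -> R) : E (fun w => c * f w) = c * E f.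
Proof. by rewrite /Expect big_distrr; apply: eq_bigr => w _; rewrite mulrCA. Qed.

Lemma ExpectMr (c : R) (f : Omega n A -> R) : E (fun w => f w * c) = E f * c.
Proof. by rewrite /Expect big_distrl; apply: eq_bigr => w _; rewrite mulrA. Qed.

Lemma Expect_prod (F : 'I_n * A -> bool -> R) :
  E (fun w => \prod_k F k (w k))
    = \prod_(k : 'I_n * A)
        (P (k.1 : nat).+1 k.2 * F k true + (1 - P (k.1 : nat).+1 k.2) * F k false).
Proof.
rewrite (eq_bigr (fun k : 'I_n * A =>
    \sum_(b : bool) if b then P (k.1 : nat).+1 k.2 * F k true
                     else (1 - P (k.1 : nat).+1 k.2) * F k false)) => [|k _]; last first.
  by rewrite big_bool.
rewrite bigA_distr_bigA; apply: eq_bigr => w _.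
by rewrite /prob -big_split; apply: eq_bigr => k _ /=; case: (w k).
Qed.

Lemma Expect1 : E (fun _ => 1) = 1.
Proof.
transitivity (E (fun w => \prod_k (fun _ (_ : bool) => 1) k (w k))).
  by apply: eq_bigr => w _; rewrite big1.
by rewrite (Expect_prod (fun _ _ => 1)) big1 // => k _; rewrite !mulr1 subrKC.
Qed.

Lemma Expect_prod_node (u : A) (G : 'I_n -> bool -> R) :
  E (fun w => \prod_i G i (w (i, u)))
    = \prod_(i < n) (P i.+1 u * G i true + (1 - P i.+1 u) * G i false).
Proof.
pose F (k : 'I_n * A) b := if k.2 == u then G k.1 b else 1.
transitivity (E (fun w => \prod_k F k (w k))).
  apply: eq_bigr => w _; congr (_ * _); rewrite -(prod_pair_at u).
  by apply: eq_bigr => -[i v] _; rewrite /F /=; case: eqP => // ->.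
rewrite (Expect_prod F) -[RHS](prod_pair_at u); apply: eq_bigr => -[i v] _; rewrite /F /=.
by case: eqP => [-> | _] //; rewrite !mulr1 subrKC.
Qed.

Lemma Expect_Zn (u : A) : E (fun w => (Zn w u)%:R) = \prod_(i < n) (1 - P i.+1 u).
Proof.
transitivity (E (fun w => \prod_i (~~ w (i, u))%:R)).
  by apply: eq_bigr => w _; rewrite prodr_nat_bool.
rewrite (Expect_prod_node u (fun _ b => (~~ b)%:R)).
by apply: eq_bigr => i _; rewrite mulr0 add0r mulr1.
Qed.

Lemma Expect_sole_success (u : A) (i : 'I_n) :
  E (fun w => (sole_success w u i)%:R) = P i.+1 u * \prod_(j | j != i) (1 - P j.+1 u).
Proof.
pose G j (b : bool) : R := if j == i then b%:R else (~~ b)%:R.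
transitivity (E (fun w => \prod_j G j (w (j, u)))).
  apply: eq_bigr => w _; congr (_ * _).
  rewrite (bigD1 i) //= /G eqxx (eq_bigr (fun j => (~~ w (j, u))%:R)) => [|j /negbTE -> //].
  by rewrite prodr_nat_bool -natrM mulnb.
rewrite (Expect_prod_node u G) (bigD1 i) //= /G eqxx mulr1 mulr0 addr0.
by congr (_ * _); apply: eq_bigr => j /negbTE ->; rewrite mulr0 add0r mulr1.
Qed.

Lemma sole_successes_le1 (w : Omega n A) (u : A) : (\sum_i sole_success w u i <= 1)%N.
Proof.
have [i hit_i | no_hit] := pickP (sole_success w u); last first.
  by rewrite big1 // => i _; rewrite no_hit.
rewrite (bigD1 i) //= big1 ?hit_i // => j ji.
move: hit_i => /andP [_ /forallP /(_ j)]; rewrite ji => /negbTE miss_j.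
by rewrite /sole_success miss_j.
Qed.

Lemma hit_once_probE (u : A) :
  hit_once_prob gamma p n u = E (fun w => (\sum_i sole_success w u i)%:R).
Proof.
transitivity (E (fun w => \sum_i (sole_success w u i)%:R)); last first.
  by apply: eq_bigr => w _; rewrite natr_sum.
by rewrite ExpectD; apply: eq_bigr => i _; rewrite Expect_sole_success.
Qed.

Hypothesis P01 : forall i u, 0 <= P i.+1 u <= 1.

Lemma prob_ge0 (w : Omega n A) : 0 <= prob gamma p w.
Proof.
apply: prodr_ge0 => k _; have /andP [P0 P1] := P01 k.1 k.2.
by case: (w k); rewrite // subr_ge0.
Qed.

Lemma ler_Expect (f g : Omega n A -> R) : (forall w, f w <= g w) -> E f <= E g.
Proof. by move=> fg; apply: ler_sum => w _; rewrite ler_wpM2l ?prob_ge0. Qed.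

Lemma hit_once_prob_itv (u : A) : 0 <= hit_once_prob gamma p n u <= 1.
Proof.
rewrite hit_once_probE; apply/andP; split.
  by apply: sumr_ge0 => w _; rewrite mulr_ge0 ?prob_ge0.
by rewrite -[leRHS]Expect1; apply: ler_Expect => w /=; rewrite lern1 sole_successes_le1.
Qed.

End ProductBernoulli.

Arguments hit_once_prob_itv {R A gamma p n} P01 u.

Section GoodTuringBias.
Variables (R : realFieldType) (A : finType) (gamma : nat -> R) (p : A -> R) (n : nat).

Local Notation E := (@Expect R A gamma p n).
Local Notation P i u := (Defs.pi gamma p i u).

Lemma Expect_Rn : E (Rn gamma p (n:=n)) = \sum_u P n.+1 u * \prod_(i < n) (1 - P i.+1 u).
Proof.
by rewrite /Rn ExpectD; apply: eq_bigr => u _; rewrite ExpectMr Expect_Zn mulrC.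
Qed.

Hypothesis gamma_neq0 : forall i, gamma i.+1 != 0.

Lemma Expect_Rhat :
  E (Rhat gamma (n:=n))
    = gamma n.+1 / n%:R * \sum_u p u * \sum_(i < n) \prod_(j | j != i) (1 - P j.+1 u).
Proof.
rewrite /Rhat ExpectMl ExpectD [RHS]mulrAC [RHS]mulrC; congr (_ * _); rewrite big_distrr.
apply: eq_bigr => u _; rewrite /Ugamma ExpectD !big_distrr; apply: eq_bigr => i _ /=.
by rewrite ExpectMr Expect_sole_success /Defs.pi; field.
Qed.

Hypothesis n_gt0 : (0 < n)%N.

Lemma Expect_Rn_sub_Rhat :
  E (Rn gamma p (n:=n)) - E (Rhat gamma (n:=n))
    = - (gamma n.+1 / n%:R) * \sum_u p u * hit_once_prob gamma p n u.
Proof.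
have n_neq0 : n%:R != 0 :> R by rewrite pnatr_eq0 -lt0n.
have Expect_Rn_scaled : E (Rn gamma p (n:=n))
    = gamma n.+1 / n%:R * \sum_u p u * (#|'I_n|%:R * \prod_(i < n) (1 - P i.+1 u)).
  rewrite Expect_Rn big_distrr; apply: eq_bigr => u _.
  by rewrite /= card_ord /Defs.pi (mulrCA (p u)) -!mulrA mulKf.
rewrite Expect_Rn_scaled Expect_Rhat -mulrBr -sumrB mulNr -mulrN -sumrN; congr (_ * _).
apply: eq_bigr => u _.
by rewrite /hit_once_prob -(sum_prod_off_diag (fun i : 'I_n => P i.+1 u)); ring.
Qed.

End GoodTuringBias.

Arguments Expect_Rn_sub_Rhat {R A gamma p n} gamma_neq0 n_gt0.

Theorem mainTheorem5 (R : realFieldType) (A : finType) (p : A -> R) (gamma : nat -> R)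
  (n : nat)
  (hp : forall u, 0 <= p u <= 1)
  (hgamma : forall i, (0 < i)%N -> 0 < gamma i <= 1)
  (hmono : forall i j, (0 < i)%N -> (i <= j)%N -> gamma j <= gamma i)
  (hn : (0 < n)%N) :
  let lambda := \sum_(u : A) p u in
  let d := Expect gamma p (Rn gamma p (n:=n)) - Expect gamma p (Rhat gamma (n:=n)) in
  - (gamma n.+1 * lambda / n%:R) <= d /\ d <= 0.
Proof.
move=> lambda d.
have gamma_gt0 i : 0 < gamma i.+1 by case/andP: (hgamma i.+1 isT).
have pi01 i u : 0 <= Defs.pi gamma p i.+1 u <= 1.
  have /andP [/ltW g0 g1] := hgamma i.+1 isT; have /andP [p0 p1] := hp u.
  by rewrite mulr_ge0 ?mulr_ile1.
have scale_ge0 : 0 <= gamma n.+1 / n%:R by rewrite divr_ge0 ?ler0n ?ltW.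
have weighted_bounds u : 0 <= p u * hit_once_prob gamma p n u <= p u.
  have /andP [p0 _] := hp u.
  have /andP [h0 h1] := hit_once_prob_itv (n:=n) pi01 u.
  by rewrite mulr_ge0 // -[leRHS]mulr1 ler_wpM2l.
have gamma_neq0 i : gamma i.+1 != 0 by exact: lt0r_neq0.
rewrite /d (Expect_Rn_sub_Rhat gamma_neq0 hn) mulNr; split.
  rewrite lerN2 [leRHS]mulrAC ler_wpM2l // ler_sum // => u _.
  by case/andP: (weighted_bounds u).
rewrite oppr_le0 mulr_ge0 // sumr_ge0 // => u _.
by case/andP: (weighted_bounds u).
Qed.
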